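(* Fix an integer $N\ge 1$. For real $\mu$, let $\ell^2_\mu\subset\mathbb{C}^\infty$ be the space of sequences with norm $\|\mathbf u\|_{\ell^2_\mu}=\bigl(\sum_{k\ge0}|u_k|^2(k+1)^{2\mu}\bigr)^{1/2}$. Let $\mathcal L$, $\mathcal B$, $D$ and the operators $\mathcal S_\lambda$ be as in the context. Let $\mathbf c\in\mathbb{C}^N$, and let $\mathbf f\in\ell^2_{\lambda-N+1}$ for some $\lambda\in\{D-1,D,D+1,\dots\}$ (the Chebyshev coefficients of the right-hand side). Suppose that $\begin{pmatrix}\mathcal B\\ \mathcal L\end{pmatrix}:\ell^2_{\lambda+1}\to\ell^2_\lambda$ is invertible, and let $\mathbf u\in\ell^2_{\lambda+1}$ be the solution of $\begin{pmatrix}\mathcal B\\ \mathcal L\end{pmatrix}\mathbf u=\begin{pmatrix}\mathbf c\\ \mathcal S_{N-1}\cdots\mathcal S_0\mathbf f\end{pmatrix}$. Let $\mathcal P_n=(I_n,\mathbf 0)$ be the $n\times\infty$ projection onto the first $n$ entries, $A_n=\mathcal P_n\begin{pmatrix}\mathcal B\\ \mathcal L\end{pmatrix}\mathcal P_n^\top$, and define $$\mathbf u_n=A_n^{-1}\mathcal P_n\begin{pmatrix}\mathbf c\\ \mathcal S_{N-1}\cdots\mathcal S_0\mathbf f\end{pmatrix}.$$ Then there is a constant $C$, independent of $n$, such that (for all sufficiently large $n$) $$\|\mathbf u-\mathcal P_n^\top\mathbf u_n\|_{\ell^2_{\lambda+1}}\le C\,\|\mathbf u-\mathcal P_n^\top\mathcal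 P_n\mathbf u\|_{\ell^2_{\lambda+1}}\longrightarrow0\quad(n\to\infty).$$
   Context: Chebyshev polynomials are $T_k(x)=\cos(k\arccos x)$. For integers $\lambda\ge1$, $C^{(\lambda)}_k$ are the ultraspherical polynomials, orthogonal on $[-1,1]$ with weight $(1-x^2)^{\lambda-1/2}$ and normalized so that $C^{(\lambda)}_k(x)=\frac{2^k(\lambda)_k}{k!}x^k+O(x^{k-1})$, $(\lambda)_k=\frac{(\lambda+k-1)!}{(\lambda-1)!}$. Operators act on coefficient sequences indexed from $0$. $(\mathcal D_\lambda\mathbf u)_j=2^{\lambda-1}(\lambda-1)!\,(j+\lambda)u_{j+\lambda}$ (maps Chebyshev coefficients of $u$ to $C^{(\lambda)}$ coefficients of $u^{(\lambda)}$). $(\mathcal S_0\mathbf u)_0=u_0-\tfrac12u_2$, $(\mathcal S_0\mathbf u)_j=\tfrac12(u_j-u_{j+2})$ for $j\ge1$ (Chebyshev to $C^{(1)}$ coefficients); for $\lambda\ge1$, $(\mathcal S_\lambda\mathbf v)_j=\frac{\lambda}{\lambda+j}v_j-\frac{\lambda}{\lambda+j+2}v_{j+2}$ ($C^{(\lambda)}$ to $C^{(\lambda+1)}$ coefficients). $\mathcal M_0[a]$ maps Chebyshev coefficients of $v$ to Chebyshev coefficients of $av$, and for $\lambda\ge1$, $\mathcal M_\lambda[a]$ maps $C^{(\lambda)}$ coefficients of $v$ to $C^{(\lambda)}$ coefficients of $av$. The $N$th order differential operator $u\mapsto u^{(N)}+\sum_{\lambda=0}^{N-1}a^\lambda u^{(\lambda)}$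 on $[-1,1]$ (leading coefficient $1$) is represented on Chebyshev coefficients by $\mathcal L=\mathcal D_N+\sum_{\lambda=1}^{N-1}\mathcal S_{N-1}\cdots\mathcal S_\lambda\mathcal M_\lambda[a^\lambda]\mathcal D_\lambda+\mathcal S_{N-1}\cdots\mathcal S_0\mathcal M_0[a^0]$, where the coefficient functions $a^0,\dots,a^{N-1}$ are sufficiently smooth that each $\mathcal M_\lambda[a^\lambda]$ is bounded on every $\ell^2_\mu$. $\mathcal B$ is a linear operator from sequences to $\mathbb{C}^N$ representing exactly $N$ boundary conditions on the Chebyshev coefficients (e.g. Dirichlet: rows $(T_k(-1))_k$ and $(T_k(1))_k$), and $D$ is an integer such that $\mathcal B:\ell^2_D\to\mathbb{C}^N$ is bounded. $\begin{pmatrix}\mathcal B\\ \mathcal L\end{pmatrix}$ outputs the $N$ entries of $\mathcal B\mathbf u$ followed by $\mathcal L\mathbf u$. *)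

From Stdlib Require Import Reals ZArith.
From Coquelicot Require Export Coquelicot.
Open Scope R_scope.

Definition seqC := nat -> C.

Definition l2_term (mu : R) (u : seqC) (k : nat) : R :=
  (Cmod (u k)) ^ 2 * Rpower (INR k + 1) (2 * mu).
Definition in_l2 (mu : R) (u : seqC) : Prop := ex_series (l2_term mu u).
Definition l2norm (mu : R) (u : seqC) : R := sqrt (Series (l2_term mu u)).

Definition cseries_conv (s : nat -> C) : Prop :=
  ex_series (fun k => Re (s k)) /\ ex_series (fun k => Im (s k)).
Definition cseries (s : nat -> C) : C :=
  (Series (fun k => Re (s k)), Series (fun k => Im (s k))).
Definition cint (g : R -> C) (lo hi : R) : C :=
  (RInt (fun x => Re (g x)) lo hi, RInt (fun x => Im (g x)) lo hi).

Fixpoint csum (n : nat) (g : nat -> C) : C :=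
  match n with O => RtoC 0 | S m => Cplus (csum m g) (g m) end.

Definition cheb_T (k : nat) (x : R) : R := cos (INR k * acos x).

(** Ultraspherical polynomials C^(lam)_k (lam >= 1), via the three-term
    recurrence  (k+1) C_{k+1} = 2(k+lam) x C_k - (k+2lam-1) C_{k-1},
    C_0 = 1, C_1 = 2 lam x.  [ultra_pair lam k x = (C_k(x), C_{k+1}(x))]. *)
Fixpoint ultra_pair (lam k : nat) (x : R) : R * R :=
  match k with
  | O => (1, 2 * INR lam * x)
  | S k' => let (p, q) := ultra_pair lam k' x in
      (q, (2 * (INR k' + 1 + INR lam) * x * q
           - (INR k' + 2 * INR lam) * p) / (INR k' + 2))
  end.
Definition ultra (lam k : nat) (x : R) : R := fst (ultra_pair lam k x).

(** Weight (1-x^2)^(lam-1/2) for lam >= 1, written (1-x^2)^(lam-1) sqrt(1-x^2). *)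
Definition ultra_w (lam : nat) (x : R) : R := (1 - x ^ 2) ^ (lam - 1) * sqrt (1 - x ^ 2).

(** Matrix entries of the multiplication operator M_lam[a]: the j-th
    coefficient (in the orthogonal basis) of a * (k-th basis polynomial). *)
Definition mult_entry (lam : nat) (a : R -> C) (j k : nat) : C :=
  match lam with
  | O => (* Chebyshev basis, weight (1-x^2)^(-1/2); substitution x = cos t *)
      Cmult (cint (fun t => Cmult (a (cos t))
                      (RtoC (cheb_T k (cos t) * cheb_T j (cos t)))) 0 PI)
            (RtoC (/ RInt (fun t => (cheb_T j (cos t)) ^ 2) 0 PI))
  | _ =>
      Cmult (cint (fun x => Cmult (a x)
                      (RtoC (ultra lam k x * ultra lam j x * ultra_w lam x))) (-1) 1)
            (RtoC (/ RInt (fun x => (ultra lam j x) ^ 2 * ultra_w lam x) (-1) 1))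
  end.
Definition Mop (lam : nat) (a : R -> C) (v : seqC) : seqC :=
  fun j => cseries (fun k => Cmult (mult_entry lam a j k) (v k)).

Definition Dop (lam : nat) (u : seqC) : seqC :=
  fun j => Cmult (RtoC (2 ^ (lam - 1) * INR (fact (lam - 1)) * INR (j + lam)))
                 (u (j + lam)%nat).

Definition S0 (u : seqC) : seqC :=
  fun j => match j with
           | O => Cminus (u 0%nat) (Cmult (RtoC (1/2)) (u 2%nat))
           | _ => Cmult (RtoC (1/2)) (Cminus (u j) (u (j + 2)%nat))
           end.
Definition Slam (lam : nat) (v : seqC) : seqC :=
  fun j => Cminus (Cmult (RtoC (INR lam / (INR lam + INR j))) (v j))
                  (Cmult (RtoC (INR lam / (INR lam + INR j + 2))) (v (j + 2)%nat)).
Definition Sop (lam : nat) : seqC -> seqC :=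
  match lam with O => S0 | _ => Slam lam end.

(** [Schain lo n] = S_{lo+n-1} ... S_{lo+1} S_lo. *)
Fixpoint Schain (lo n : nat) (u : seqC) : seqC :=
  match n with O => u | S m => Schain (S lo) m (Sop lo u) end.

(** L = D_N + sum_{lam=1}^{N-1} S_{N-1}..S_lam M_lam[a^lam] D_lam
          + S_{N-1}..S_0 M_0[a^0]. *)
Definition Lop (N : nat) (a : nat -> R -> C) (u : seqC) : seqC :=
  fun j => Cplus (Cplus (Dop N u j)
      (csum (N - 1) (fun i => Schain (S i) (N - S i) (Mop (S i) (a (S i)) (Dop (S i) u)) j)))
      (Schain 0 N (Mop 0 (a 0%nat) u) j).

Definition BLop (N : nat) (a : nat -> R -> C) (B : nat -> seqC -> C) (u : seqC) : seqC :=
  fun j => if (j <? N)%nat then B j u else Lop N a u (j - N)%nat.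

Definition rhs (N : nat) (c : nat -> C) (f : seqC) : seqC :=
  fun j => if (j <? N)%nat then c j else Schain 0 N f (j - N)%nat.

(** P_n^T P_n : keep the first n entries, zero the rest. *)
Definition pad (n : nat) (x : seqC) : seqC := fun k => if (k <? n)%nat then x k else RtoC 0.

Definition seq_sub (u v : seqC) : seqC := fun k => Cminus (u k) (v k).

Definition invertible_between (T : seqC -> seqC) (m1 m2 : R) : Prop :=
  (exists K, forall u, in_l2 m1 u -> in_l2 m2 (T u) /\ l2norm m2 (T u) <= K * l2norm m1 u) /\
  (forall g, in_l2 m2 g -> exists u, in_l2 m1 u /\ forall j, T u j = g j) /\
  (forall u v, in_l2 m1 u -> in_l2 m1 v -> (forall j, T u j = T v j) -> forall k, u k = v k) /\
  (exists K, forall u, in_l2 m1 u -> l2norm m1 u <= K * l2norm m2 (T u)).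

(** The n x n finite section A_n = P_n T P_n^T is invertible (on C^n, vectors
    represented by their first n entries). *)
Definition finsec_invertible (T : seqC -> seqC) (n : nat) : Prop :=
  forall b : seqC, exists x : seqC,
    (forall i, (i < n)%nat -> T (pad n x) i = b i) /\
    (forall y : seqC, (forall i, (i < n)%nat -> T (pad n y) i = b i) ->
       forall k, (k < n)%nat -> y k = x k).

From Stdlib Require Import Reals ZArith Lra Lia Psatz FunctionalExtensionality.
From Coquelicot Require Import Coquelicot.
From mathcomp Require all_boot all_algebra Rstruct.
Open Scope R_scope.

(* Write T = (B; L) and L = D_N + L_lower.  The lower-order part L_lower maps
   l^2_(lam+1) to itself, i.e. it has one weight to spare compared with D_N.
   For x supported in the first n entries, D_N x vanishes from index n - N on,
   so the entries of T x discarded by P_n come from L_lower x alone and have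
   l^2_lam norm O(1/n) ||x||_(lam+1).  Hence the lower bound of the invertible
   T survives truncation: ||x||_(lam+1) <= c ||P_n T x||_lam for all large n.
   This makes A_n injective, hence invertible.  Applied to P_n^T P_n u - P_n^T u_n,
   whose image under P_n T is minus that of the tail u - P_n^T P_n u, it also
   bounds the error by a constant times the best approximation error. *)

Module FiniteDimension.
Import all_boot all_algebra Rstruct GRing.Theory.
Local Open Scope ring_scope.

Lemma row_linear_injective_surjective (F : fieldType) (n : nat) (g : 'rV[F]_n -> 'rV[F]_n) :
  (forall a r s, g (a *: r + s) = a *: g r + g s) -> (forall r, g r = 0 -> r = 0) ->
  forall b, exists r, g r = b.
Proof.
move=> g_lin g_inj b.
have g0 : g 0 = 0.
  have := g_lin 1 0 0; rewrite !scale1r addr0 => g00.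
  by apply: (addrI (g 0)); rewrite addr0 -g00.
have gD : {morph g : r s / r + s} by move=> r s; rewrite -[r]scale1r g_lin !scale1r.
have gZ a r : g (a *: r) = a *: g r by rewrite -[a *: r]addr0 g_lin g0 addr0.
pose M := \matrix_(i < n, j < n) g (delta_mx 0 i) 0 j.
have gM r : r *m M = g r.
  rewrite mulmx_sum_row {2}(row_sum_delta r) (big_morph g gD g0).
  by apply: eq_bigr => i _; rewrite gZ; congr (_ *: _); apply/rowP => j; rewrite !mxE.
have M_unit : M \in unitmx.
  rewrite -row_free_unit /row_free; apply/eqP.
  have : kermx M = 0.
    apply/row_matrixP => i; rewrite row0.
    by apply: g_inj; rewrite -gM -row_mul mulmx_ker row0.
  move/(congr1 mxrank); rewrite mxrank0 mxrank_ker => /eqP; rewrite subn_eq0 => le_n_rk.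
  by apply/eqP; rewrite eqn_leq rank_leq_row le_n_rk.
by exists (b *m invmx M); rewrite -gM -mulmxA mulVmx // mulmx1.
Qed.

Lemma linear_injective_surjective (F : fieldType) (m : nat)
    (f : (nat -> F) -> nat -> F) :
  (forall x y, (forall k, lt k m -> x k = y k) -> forall i, lt i m -> f x i = f y i) ->
  (forall a x y i, lt i m -> f (fun k => a * x k + y k) i = a * f x i + f y i) ->
  (forall x, (forall i, lt i m -> f x i = 0) -> forall k, lt k m -> x k = 0) ->
  forall b, exists x, forall i, lt i m -> f x i = b i.
Proof.
move=> f_local f_lin f_inj b.
have ltE k : lt k m <-> (k < m)%N by split => /ltP.
pose tov (x : nat -> F) : 'rV[F]_m := \row_(j < m) x j.
pose ofv (r : 'rV[F]_m) k := if insub k is Some j then r 0 j else 0.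
have ofvK r (j : 'I_m) : ofv r j = r 0 j by rewrite /ofv valK.
have tovK x k : lt k m -> ofv (tov x) k = x k.
  by move=> /ltE k_lt; rewrite /ofv insubT /tov mxE.
pose g r := tov (f (ofv r)).
have g_lin a r s : g (a *: r + s) = a *: g r + g s.
  apply/rowP => j; rewrite /g /tov !mxE -f_lin; last exact/ltE.
  apply: f_local; last exact/ltE.
  by move=> k /ltE k_lt; rewrite /ofv insubT !mxE.
have g_inj r : g r = 0 -> r = 0.
  move=> gr0; apply/rowP => j; rewrite mxE -ofvK.
  apply: f_inj; last exact/ltE.
  move=> i i_lt; rewrite -(tovK _ _ i_lt) -/(g r) gr0.
  by rewrite /ofv; case: insubP => // j' _ _; rewrite mxE.
have [r gr] := row_linear_injective_surjective _ _ _ g_lin g_inj (tov b).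
exists (ofv r) => i i_lt.
by rewrite -(tovK (f (ofv r)) i i_lt) -/(g r) gr tovK.
Qed.

(* Stated with Stdlib's operations on R, where it is used, outside the scope of
   the canonical field structure on R. *)
Lemma linear_injective_surjective_R (m : nat) (f : (nat -> R) -> nat -> R) :
  (forall x y, (forall k, lt k m -> x k = y k) -> forall i, lt i m -> f x i = f y i) ->
  (forall a x y i, lt i m ->
     f (fun k => Rplus (Rmult a (x k)) (y k)) i = Rplus (Rmult a (f x i)) (f y i)) ->
  (forall x, (forall i, lt i m -> f x i = 0%R) -> forall k, lt k m -> x k = 0%R) ->
  forall b, exists x, forall i, lt i m -> f x i = b i.
Proof. exact: linear_injective_surjective. Qed.

End FiniteDimension.

Lemma Rpower_pos x e : 0 < Rpower x e.
Proof. apply exp_pos. Qed.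

Lemma Rpower_le_abs x y M e : 0 < x -> 0 < y -> x <= M * y -> y <= M * x ->
  Rpower x e <= Rpower M (Rabs e) * Rpower y e.
Proof.
  intros x_pos y_pos x_le y_le.
  assert (M_pos : 0 < M) by (destruct (Rle_or_lt M 0); nra).
  unfold Rpower. rewrite <- exp_plus.
  enough (e * ln x <= Rabs e * ln M + e * ln y) as [lt | ->];
    [left; apply exp_increasing, lt | right; reflexivity |].
  assert (ln x <= ln M + ln y) by (rewrite <- ln_mult by lra; apply ln_le; lra).
  assert (ln y <= ln M + ln x) by (rewrite <- ln_mult by lra; apply ln_le; lra).
  assert (Rabs (ln x - ln y) <= ln M) by (apply Rabs_le; lra).
  assert (e * (ln x - ln y) <= Rabs e * ln M).
  { eapply Rle_trans; [apply Rle_abs|]. rewrite Rabs_mult.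
    apply Rmult_le_compat_l; [apply Rabs_pos | assumption]. }
  lra.
Qed.

Lemma Rpower_plus1_sq x mu : 0 < x -> Rpower x (2 * (mu + 1)) = Rpower x (2 * mu) * x ^ 2.
Proof.
  intros x_pos. replace (2 * (mu + 1)) with (2 * mu + INR 2) by (simpl; lra).
  rewrite Rpower_plus, Rpower_pow; auto.
Qed.

Lemma sum_n_nonneg (a : nat -> R) n : (forall k, 0 <= a k) -> 0 <= sum_n a n.
Proof.
  intros a_ge0. induction n as [|n IH].
  - rewrite sum_O. apply a_ge0.
  - rewrite sum_Sn. specialize (a_ge0 (S n)). unfold plus; simpl. lra.
Qed.

Lemma Series_nonneg (a : nat -> R) : (forall k, 0 <= a k) -> 0 <= Series a.
Proof.
  intros a_ge0. unfold Series.
  assert (incr : forall n, sum_n a n <= sum_n a (S n)).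
  { intro n. rewrite sum_Sn. specialize (a_ge0 (S n)). unfold plus; simpl. lra. }
  pose proof (Lim_seq_correct _ (ex_lim_seq_incr _ incr)) as lim.
  destruct (Lim_seq (sum_n a)) as [r| |] eqn:E; simpl; try lra.
  apply (is_lim_seq_le (fun _ => 0) (sum_n a) 0 r); auto.
  - intro n. apply sum_n_nonneg, a_ge0.
  - apply is_lim_seq_const.
Qed.

Lemma ex_series_le_nonneg (a b : nat -> R) :
  (forall k, 0 <= a k <= b k) -> ex_series b -> ex_series a /\ Series a <= Series b.
Proof.
  intros ab b_ex. split; [|apply Series_le; auto].
  apply (ex_series_le a b); auto. intro n. specialize (ab n).
  change (norm (a n)) with (Rabs (a n)). rewrite Rabs_pos_eq; lra.
Qed.

Lemma Series_shift_le (a : nat -> R) m :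
  (forall k, 0 <= a k) -> ex_series a ->
  ex_series (fun k => a (k + m)%nat) /\ Series (fun k => a (k + m)%nat) <= Series a.
Proof.
  intros a_ge0 a_ex.
  assert (shift_ex : ex_series (fun k => a (m + k)%nat)) by (apply ex_series_incr_n; auto).
  assert (shiftE : forall k, a (k + m)%nat = a (m + k)%nat) by (intro; f_equal; lia).
  split; [eapply ex_series_ext; [intro; symmetry; apply shiftE | exact shift_ex]|].
  rewrite (Series_ext _ _ shiftE).
  destruct m as [|m].
  - apply Req_le, Series_ext. reflexivity.
  - rewrite (Series_incr_n a (S m)) by (lia || auto).
    pose proof (cond_pos_sum a (Init.Nat.pred (S m)) a_ge0). lra.
Qed.

Lemma term_le_Series (a : nat -> R) k :
  (forall k, 0 <= a k) -> ex_series a -> a k <= Series a.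
Proof.
  intros a_ge0 a_ex.
  rewrite (Series_incr_n a (S k)) by (lia || auto). simpl Init.Nat.pred.
  pose proof (Series_nonneg (fun j => a (S k + j)%nat) (fun j => a_ge0 _)).
  enough (a k <= sum_f_R0 a k) by lra.
  destruct k as [|k]; simpl.
  - lra.
  - pose proof (cond_pos_sum a k a_ge0). lra.
Qed.

Lemma Series_lincomb (a b : nat -> R) c d : ex_series a -> ex_series b ->
  ex_series (fun k => c * a k + d * b k) /\
  Series (fun k => c * a k + d * b k) = c * Series a + d * Series b.
Proof.
  intros a_ex b_ex.
  assert (ca : ex_series (fun k => c * a k)) by exact (ex_series_scal_l c a a_ex).
  assert (db : ex_series (fun k => d * b k)) by exact (ex_series_scal_l d b b_ex).
  split; [exact (ex_series_plus _ _ ca db)|].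
  rewrite Series_plus by auto. rewrite !Series_scal_l. reflexivity.
Qed.

Lemma Cmod_plus_sq a b : Cmod (Cplus a b) ^ 2 <= 2 * Cmod a ^ 2 + 2 * Cmod b ^ 2.
Proof.
  pose proof (Cmod_triangle a b) as triangle.
  pose proof (Cmod_ge_0 (Cplus a b)) as ab_ge0.
  pose proof (Rmult_le_compat _ _ _ _ ab_ge0 ab_ge0 triangle triangle).
  pose proof (pow2_ge_0 (Cmod a - Cmod b)). simpl in *. lra.
Qed.

Lemma Cmod_lincomb_sq al be z w :
  Cmod (Cminus (Cmult (RtoC al) z) (Cmult (RtoC be) w)) ^ 2
  <= 2 * al ^ 2 * Cmod z ^ 2 + 2 * be ^ 2 * Cmod w ^ 2.
Proof.
  unfold Cminus. eapply Rle_trans; [apply Cmod_plus_sq|].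
  rewrite Cmod_opp, !Cmod_mult, !Cmod_R, !Rpow_mult_distr, !pow2_abs. lra.
Qed.

Definition l2sq (mu : R) (u : seqC) : R := Series (l2_term mu u).

Lemma l2_term_nonneg mu u k : 0 <= l2_term mu u k.
Proof.
  apply Rmult_le_pos; [apply pow2_ge_0 | left; apply Rpower_pos].
Qed.

Lemma l2sq_nonneg mu u : 0 <= l2sq mu u.
Proof. apply Series_nonneg, l2_term_nonneg. Qed.

Lemma l2norm_le_sq mu1 mu2 u v K :
  l2norm mu1 u <= K * l2norm mu2 v -> l2sq mu1 u <= K ^ 2 * l2sq mu2 v.
Proof.
  unfold l2norm; fold (l2sq mu1 u) (l2sq mu2 v). intros le.
  pose proof (l2sq_nonneg mu1 u). pose proof (l2sq_nonneg mu2 v).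
  pose proof (sqrt_pos (l2sq mu1 u)) as sqrt_ge0.
  pose proof (Rmult_le_compat _ _ _ _ sqrt_ge0 sqrt_ge0 le le) as sq.
  rewrite sqrt_sqrt in sq by assumption.
  replace (K * sqrt (l2sq mu2 v) * (K * sqrt (l2sq mu2 v)))
    with (K ^ 2 * (sqrt (l2sq mu2 v) * sqrt (l2sq mu2 v))) in sq by ring.
  rewrite sqrt_sqrt in sq by assumption. exact sq.
Qed.

Lemma l2sq_le_of_Cmod_le mu x y : (forall k, Cmod (x k) <= Cmod (y k)) -> in_l2 mu y ->
  in_l2 mu x /\ l2sq mu x <= l2sq mu y.
Proof.
  intros xy y_l2. apply ex_series_le_nonneg; auto. intro k. split; [apply l2_term_nonneg|].
  apply Rmult_le_compat_r; [left; apply Rpower_pos|].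
  apply pow_incr. split; [apply Cmod_ge_0 | apply xy].
Qed.

Lemma l2sq_eq0 mu x : in_l2 mu x -> l2sq mu x = 0 -> forall k, x k = RtoC 0.
Proof.
  intros x_l2 x0 k.
  pose proof (term_le_Series (l2_term mu x) k (l2_term_nonneg mu x) x_l2) as le.
  fold (l2sq mu x) in le. rewrite x0 in le.
  pose proof (l2_term_nonneg mu x k). pose proof (Rpower_pos (INR k + 1) (2 * mu)).
  assert (Cmod (x k) ^ 2 = 0) as sq0.
  { unfold l2_term in *. apply (Rmult_eq_reg_r (Rpower (INR k + 1) (2 * mu))); lra. }
  apply Cmod_eq_0. pose proof (Cmod_ge_0 (x k)). simpl in sq0. nra.
Qed.

Definition l2_bounded (T : seqC -> seqC) (mu1 mu2 : R) : Prop :=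
  exists K, 0 <= K /\
    forall v, in_l2 mu1 v -> in_l2 mu2 (T v) /\ l2sq mu2 (T v) <= K * l2sq mu1 v.

Lemma l2_bounded_in T mu1 mu2 v : l2_bounded T mu1 mu2 -> in_l2 mu1 v -> in_l2 mu2 (T v).
Proof. intros [K [_ T_bd]] v_l2. apply (T_bd v v_l2). Qed.

Lemma l2_bounded_termwise T mu1 mu2 K1 K2 s : 0 <= K1 -> 0 <= K2 ->
  (forall v k, l2_term mu2 (T v) k <= K1 * l2_term mu1 v k + K2 * l2_term mu1 v (k + s)%nat) ->
  l2_bounded T mu1 mu2.
Proof.
  intros K1_ge0 K2_ge0 termwise. exists (K1 + K2). split; [lra|]. intros v v_l2.
  destruct (Series_shift_le (l2_term mu1 v) s (l2_term_nonneg mu1 v) v_l2) as [shift_ex shift_le].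
  destruct (Series_lincomb _ _ K1 K2 v_l2 shift_ex) as [comb_ex comb_eq].
  destruct (ex_series_le_nonneg (l2_term mu2 (T v)) _
              (fun k => conj (l2_term_nonneg _ _ k) (termwise v k)) comb_ex) as [Tv_ex Tv_le].
  split; [exact Tv_ex|]. unfold l2sq. rewrite comb_eq in Tv_le.
  pose proof (l2sq_nonneg mu1 v). unfold l2sq in *. nra.
Qed.

Lemma l2_bounded_id mu1 mu2 : mu2 <= mu1 -> l2_bounded (fun v => v) mu1 mu2.
Proof.
  intros mu21. apply (l2_bounded_termwise _ _ _ 1 0 0); try lra.
  intros v k. unfold l2_term. rewrite Rmult_0_l, Rplus_0_r, Rmult_1_l.
  apply Rmult_le_compat_l; [apply pow2_ge_0|].
  apply Rle_Rpower; [pose proof (pos_INR k) |]; lra.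
Qed.

Lemma l2_bounded_comp T1 T2 mu1 mu2 mu3 :
  l2_bounded T1 mu1 mu2 -> l2_bounded T2 mu2 mu3 -> l2_bounded (fun v => T2 (T1 v)) mu1 mu3.
Proof.
  intros [K1 [K1_ge0 T1_bd]] [K2 [K2_ge0 T2_bd]]. exists (K2 * K1). split; [nra|].
  intros v v_l2. destruct (T1_bd v v_l2) as [T1v_l2 T1v_le].
  destruct (T2_bd _ T1v_l2) as [T2v_l2 T2v_le]. split; [exact T2v_l2|].
  eapply Rle_trans; [exact T2v_le|]. rewrite Rmult_assoc.
  apply Rmult_le_compat_l; assumption.
Qed.

Lemma l2_bounded_plus T1 T2 mu1 mu2 : l2_bounded T1 mu1 mu2 -> l2_bounded T2 mu1 mu2 ->
  l2_bounded (fun v j => Cplus (T1 v j) (T2 v j)) mu1 mu2.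
Proof.
  intros [K1 [K1_ge0 T1_bd]] [K2 [K2_ge0 T2_bd]]. exists (2 * K1 + 2 * K2). split; [nra|].
  intros v v_l2. destruct (T1_bd v v_l2) as [T1v_l2 T1v_le].
  destruct (T2_bd v v_l2) as [T2v_l2 T2v_le].
  destruct (Series_lincomb _ _ 2 2 T1v_l2 T2v_l2) as [comb_ex comb_eq].
  assert (termwise : forall k, 0 <= l2_term mu2 (fun j => Cplus (T1 v j) (T2 v j)) k <=
     2 * l2_term mu2 (T1 v) k + 2 * l2_term mu2 (T2 v) k).
  { intro k. split; [apply l2_term_nonneg|]. unfold l2_term.
    pose proof (Cmod_plus_sq (T1 v k) (T2 v k)). pose proof (Rpower_pos (INR k + 1) (2 * mu2)).
    nra. }
  destruct (ex_series_le_nonneg _ _ termwise comb_ex) as [sum_ex sum_le].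
  split; [exact sum_ex|]. unfold l2sq in *. rewrite comb_eq in sum_le. nra.
Qed.

Lemma l2_bounded_zero mu1 mu2 : l2_bounded (fun _ _ => RtoC 0) mu1 mu2.
Proof.
  apply (l2_bounded_termwise _ _ _ 0 0 0); try lra.
  intros v k. unfold l2_term. rewrite Cmod_0. lra.
Qed.

Lemma l2_bounded_csum (F : nat -> seqC -> seqC) mu1 mu2 m :
  (forall i, (i < m)%nat -> l2_bounded (F i) mu1 mu2) ->
  l2_bounded (fun v j => csum m (fun i => F i v j)) mu1 mu2.
Proof.
  induction m as [|m IH]; intros F_bd; simpl.
  - apply l2_bounded_zero.
  - apply (l2_bounded_plus (fun v j => csum m (fun i => F i v j)) (F m)).
    + apply IH. intros; apply F_bd; lia.
    + apply F_bd; lia.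
Qed.

Lemma Rpower_weight_shift k s mu :
  Rpower (INR k + 1) (2 * mu)
    <= Rpower (INR s + 1) (Rabs (2 * mu)) * Rpower (INR (k + s) + 1) (2 * mu) /\
  Rpower (INR (k + s) + 1) (2 * mu)
    <= Rpower (INR s + 1) (Rabs (2 * mu)) * Rpower (INR k + 1) (2 * mu).
Proof.
  rewrite plus_INR. pose proof (pos_INR k). pose proof (pos_INR s).
  split; apply Rpower_le_abs; nra.
Qed.

Lemma Dop_termwise l mu v k :
  l2_term mu (Dop l v) k <=
  (2 ^ (l - 1) * INR (fact (l - 1))) ^ 2 * Rpower (INR l + 1) (Rabs (2 * mu))
  * l2_term (mu + 1) v (k + l).
Proof.
  unfold l2_term, Dop.
  destruct (Rpower_weight_shift k l mu) as [weight _].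
  set (d := 2 ^ (l - 1) * INR (fact (l - 1))).
  set (q := INR (k + l)) in *.
  assert (0 <= q) by apply pos_INR.
  rewrite Cmod_mult, Cmod_R, Rpow_mult_distr, pow2_abs, Rpow_mult_distr, Rpower_plus1_sq by lra.
  set (V := Cmod (v (k + l)%nat)).
  pose proof (Rpower_pos (INR k + 1) (2 * mu)). pose proof (Rpower_pos (q + 1) (2 * mu)).
  set (P := Rpower (INR k + 1) (2 * mu)) in *. set (W := Rpower (INR l + 1) (Rabs (2 * mu))) in *.
  set (Pq := Rpower (q + 1) (2 * mu)) in *.
  pose proof (pow2_ge_0 d). pose proof (pow2_ge_0 V).
  replace (d ^ 2 * q ^ 2 * V ^ 2 * P) with ((d ^ 2 * V ^ 2) * (q ^ 2 * P)) by ring.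
  replace (d ^ 2 * W * (V ^ 2 * (Pq * (q + 1) ^ 2)))
    with ((d ^ 2 * V ^ 2) * ((q + 1) ^ 2 * (W * Pq))) by ring.
  apply Rmult_le_compat_l; [nra|].
  apply Rmult_le_compat; [nra | lra | simpl; nra | exact weight].
Qed.

Lemma Dop_l2_bounded l mu : l2_bounded (Dop l) (mu + 1) mu.
Proof.
  apply (l2_bounded_termwise _ _ _ 0
           ((2 ^ (l - 1) * INR (fact (l - 1))) ^ 2 * Rpower (INR l + 1) (Rabs (2 * mu))) l
           (Rle_refl 0)).
  - apply Rmult_le_pos; [apply pow2_ge_0 | left; apply Rpower_pos].
  - intros v k. rewrite Rmult_0_l, Rplus_0_l. apply Dop_termwise.
Qed.

Lemma l2_bounded_band2 T mu nu c : 0 <= c ->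
  (forall v j, l2_term nu (T v) j
     <= c * (Cmod (v j) ^ 2 + Cmod (v (j + 2)%nat) ^ 2) * Rpower (INR j + 1) (2 * mu)) ->
  l2_bounded T mu nu.
Proof.
  intros c_ge0 band.
  apply (l2_bounded_termwise _ _ _ c (c * Rpower 3 (Rabs (2 * mu))) 2 c_ge0).
  { apply Rmult_le_pos; [exact c_ge0 | left; apply Rpower_pos]. }
  intros v j. eapply Rle_trans; [apply band|]. unfold l2_term.
  destruct (Rpower_weight_shift j 2 mu) as [weight _].
  replace (INR 2 + 1) with 3 in weight by (simpl; lra).
  pose proof (pow2_ge_0 (Cmod (v j))). pose proof (pow2_ge_0 (Cmod (v (j + 2)%nat))).
  pose proof (Rpower_pos (INR j + 1) (2 * mu)).
  pose proof (Rmult_le_compat_l (c * Cmod (v (j + 2)%nat) ^ 2) _ _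
                ltac:(apply Rmult_le_pos; assumption) weight).
  nra.
Qed.

Lemma S0_l2_bounded mu : l2_bounded S0 mu mu.
Proof.
  apply (l2_bounded_band2 _ _ _ 2); [lra|]. intros v j. unfold l2_term.
  apply Rmult_le_compat_r; [left; apply Rpower_pos|].
  destruct j as [|j]; unfold S0.
  - replace (Cminus (v 0%nat) (Cmult (RtoC (1/2)) (v 2%nat)))
      with (Cminus (Cmult (RtoC 1) (v 0%nat)) (Cmult (RtoC (1/2)) (v 2%nat))) by ring.
    eapply Rle_trans; [apply Cmod_lincomb_sq|].
    pose proof (pow2_ge_0 (Cmod (v 2%nat))).
    change (v (0 + 2)%nat) with (v 2%nat).
    replace ((1 / 2) ^ 2) with (1 / 4) by field. rewrite pow1. lra.
  - replace (Cmult (RtoC (1/2)) (Cminus (v (S j)) (v (S j + 2)%nat)))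
      with (Cminus (Cmult (RtoC (1/2)) (v (S j))) (Cmult (RtoC (1/2)) (v (S j + 2)%nat)))
      by ring.
    eapply Rle_trans; [apply Cmod_lincomb_sq|].
    pose proof (pow2_ge_0 (Cmod (v (S j)))). pose proof (pow2_ge_0 (Cmod (v (S j + 2)%nat))).
    replace ((1 / 2) ^ 2) with (1 / 4) by field. lra.
Qed.

Lemma ratio_scale_sq_le k d x : 0 <= k -> 0 <= x <= d -> 0 < d -> (k / d * x) ^ 2 <= k ^ 2.
Proof.
  intros k_ge0 x_le d_pos. unfold Rdiv.
  assert (inv : / d * d = 1) by (field; lra).
  pose proof (Rinv_0_lt_compat d d_pos).
  assert (0 <= / d * x <= 1).
  { split; [nra|]. rewrite <- inv. apply Rmult_le_compat_l; lra. }
  replace (k * / d * x) with (k * (/ d * x)) by ring.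
  set (t := / d * x) in *. assert (t * t <= 1) by nra.
  pose proof (Rmult_le_pos _ _ k_ge0 k_ge0). simpl. nra.
Qed.

Lemma Slam_l2_bounded k mu : (1 <= k)%nat -> l2_bounded (Slam k) mu (mu + 1).
Proof.
  intros k_ge1. apply le_INR in k_ge1. simpl in k_ge1.
  apply (l2_bounded_band2 _ _ _ (2 * INR k ^ 2)); [nra|]. intros v j. unfold l2_term, Slam.
  pose proof (pos_INR j).
  rewrite Rpower_plus1_sq by lra.
  set (al := INR k / (INR k + INR j)). set (be := INR k / (INR k + INR j + 2)).
  pose proof (Cmod_lincomb_sq al be (v j) (v (j + 2)%nat)) as lincomb.
  assert ((al * (INR j + 1)) ^ 2 <= INR k ^ 2) by (apply ratio_scale_sq_le; lra).
  assert ((be * (INR j + 1)) ^ 2 <= INR k ^ 2) by (apply ratio_scale_sq_le; lra).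
  set (X := Cmod _) in lincomb |- *.
  pose proof (Rpower_pos (INR j + 1) (2 * mu)). set (P := Rpower (INR j + 1) (2 * mu)) in *.
  pose proof (pow2_ge_0 (Cmod (v j))). pose proof (pow2_ge_0 (Cmod (v (j + 2)%nat))).
  apply Rle_trans with ((2 * (al * (INR j + 1)) ^ 2 * Cmod (v j) ^ 2
                         + 2 * (be * (INR j + 1)) ^ 2 * Cmod (v (j + 2)%nat) ^ 2) * P).
  - replace (X ^ 2 * (P * (INR j + 1) ^ 2)) with (X ^ 2 * (INR j + 1) ^ 2 * P) by ring.
    apply Rmult_le_compat_r; [lra|].
    replace (2 * (al * (INR j + 1)) ^ 2 * Cmod (v j) ^ 2
             + 2 * (be * (INR j + 1)) ^ 2 * Cmod (v (j + 2)%nat) ^ 2)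
      with ((2 * al ^ 2 * Cmod (v j) ^ 2 + 2 * be ^ 2 * Cmod (v (j + 2)%nat) ^ 2)
            * (INR j + 1) ^ 2) by ring.
    apply Rmult_le_compat_r; [apply pow2_ge_0 | exact lincomb].
  - apply Rmult_le_compat_r; nra.
Qed.

Lemma Sop_l2_bounded k mu : l2_bounded (Sop k) mu mu.
Proof.
  destruct k as [|k]; [apply S0_l2_bounded|].
  apply (l2_bounded_comp _ (fun w => w) mu (mu + 1) mu);
    [apply Slam_l2_bounded; lia | apply l2_bounded_id; lra].
Qed.

Lemma Schain_l2_bounded n : forall lo mu, l2_bounded (Schain lo n) mu mu.
Proof.
  induction n as [|n IH]; intros lo mu.
  - apply l2_bounded_id. lra.
  - apply (l2_bounded_comp (Sop lo) (Schain (S lo) n) mu mu mu);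
      [apply Sop_l2_bounded | apply IH].
Qed.

Lemma Schain_l2_bounded_succ n lo mu : (1 <= lo)%nat -> (1 <= n)%nat ->
  l2_bounded (Schain lo n) mu (mu + 1).
Proof.
  intros lo_ge1 n_ge1. destruct n as [|n]; [lia|].
  apply (l2_bounded_comp (Sop lo) (Schain (S lo) n) mu (mu + 1) (mu + 1));
    [destruct lo as [|lo]; [lia | apply Slam_l2_bounded; lia] | apply Schain_l2_bounded].
Qed.

Definition lincomb (al be : C) (x y : seqC) : seqC :=
  fun k => Cplus (Cmult al (x k)) (Cmult be (y k)).

Lemma Dop_lincomb l al be x y : Dop l (lincomb al be x y) = lincomb al be (Dop l x) (Dop l y).
Proof. apply functional_extensionality; intro j. unfold Dop, lincomb. ring. Qed.

Lemma Sop_lincomb k al be x y : Sop k (lincomb al be x y) = lincomb al be (Sop k x) (Sop k y).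
Proof.
  apply functional_extensionality; intro j. destruct k as [|k]; simpl.
  - unfold S0, lincomb. destruct j; ring.
  - unfold Slam, lincomb. ring.
Qed.

Lemma Schain_lincomb n : forall lo al be x y,
  Schain lo n (lincomb al be x y) = lincomb al be (Schain lo n x) (Schain lo n y).
Proof.
  induction n as [|n IH]; intros; simpl; [reflexivity|].
  rewrite Sop_lincomb. apply IH.
Qed.

Lemma pad_lincomb n al be x y : pad n (lincomb al be x y) = lincomb al be (pad n x) (pad n y).
Proof.
  apply functional_extensionality; intro k. unfold pad, lincomb.
  destruct (k <? n)%nat; [reflexivity | ring].
Qed.

Lemma csum_ext m F G : (forall i, (i < m)%nat -> F i = G i) -> csum m F = csum m G.
Proof.
  induction m as [|m IH]; intros FG; simpl; [reflexivity|].
  rewrite IH, FG; [reflexivity | lia | intros; apply FG; lia].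
Qed.

Lemma csum_lincomb m al be F G :
  csum m (fun i => Cplus (Cmult al (F i)) (Cmult be (G i)))
  = Cplus (Cmult al (csum m F)) (Cmult be (csum m G)).
Proof. induction m as [|m IH]; simpl; [ring|]. rewrite IH. ring. Qed.

Lemma cseries_lincomb (p q : nat -> C) al be : cseries_conv p -> cseries_conv q ->
  cseries (fun k => Cplus (Cmult al (p k)) (Cmult be (q k)))
  = Cplus (Cmult al (cseries p)) (Cmult be (cseries q)).
Proof.
  intros [p_re p_im] [q_re q_im]. unfold cseries. destruct al as [ar ai], be as [br bi].
  apply injective_projections; simpl.
  - rewrite (Series_ext _ (fun k => 1 * (ar * Re (p k) + (- ai) * Im (p k))
                                   + 1 * (br * Re (q k) + (- bi) * Im (q k))))
      by (intro; unfold Re, Im; simpl; ring).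
    rewrite (proj2 (Series_lincomb _ _ _ _ (proj1 (Series_lincomb _ _ _ _ p_re p_im))
                                         (proj1 (Series_lincomb _ _ _ _ q_re q_im)))).
    rewrite (proj2 (Series_lincomb _ _ _ _ p_re p_im)), (proj2 (Series_lincomb _ _ _ _ q_re q_im)).
    unfold Re, Im. ring.
  - rewrite (Series_ext _ (fun k => 1 * (ar * Im (p k) + ai * Re (p k))
                                   + 1 * (br * Im (q k) + bi * Re (q k))))
      by (intro; unfold Re, Im; simpl; ring).
    rewrite (proj2 (Series_lincomb _ _ _ _ (proj1 (Series_lincomb _ _ _ _ p_im p_re))
                                         (proj1 (Series_lincomb _ _ _ _ q_im q_re)))).
    rewrite (proj2 (Series_lincomb _ _ _ _ p_im p_re)), (proj2 (Series_lincomb _ _ _ _ q_im q_re)).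
    unfold Re, Im. ring.
Qed.

Lemma Mop_lincomb l f al be x y :
  (forall j, cseries_conv (fun k => Cmult (mult_entry l f j k) (x k))) ->
  (forall j, cseries_conv (fun k => Cmult (mult_entry l f j k) (y k))) ->
  Mop l f (lincomb al be x y) = lincomb al be (Mop l f x) (Mop l f y).
Proof.
  intros x_conv y_conv. apply functional_extensionality; intro j. unfold Mop, lincomb.
  rewrite <- cseries_lincomb by auto. f_equal.
  apply functional_extensionality; intro k. ring.
Qed.

Lemma C_ext (z w : C) : Re z = Re w -> Im z = Im w -> z = w.
Proof. intros. apply injective_projections; assumption. Qed.

(* Reduction to the real case: x : seqC is encoded by the real sequence whose
   entries k and k + n hold Re (x k) and Im (x k). *)
Lemma linear_injective_surjective_C (n : nat) (G : seqC -> seqC) :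
  (forall x y, (forall k, (k < n)%nat -> x k = y k) -> forall i, (i < n)%nat -> G x i = G y i) ->
  (forall al be x y i, (i < n)%nat ->
     G (lincomb al be x y) i = Cplus (Cmult al (G x i)) (Cmult be (G y i))) ->
  (forall x, (forall i, (i < n)%nat -> G x i = RtoC 0) -> forall k, (k < n)%nat -> x k = RtoC 0) ->
  forall b, exists x, forall i, (i < n)%nat -> G x i = b i.
Proof.
  intros G_local G_lin G_inj b.
  set (encode := fun (xr : nat -> R) (k : nat) => (xr k, xr (k + n)%nat) : C).
  set (realify := fun (z : seqC) (i : nat) => if (i <? n)%nat then Re (z i) else Im (z (i - n)%nat)).
  assert (realify_lo : forall z i, (i < n)%nat -> realify z i = Re (z i)).
  { intros z i i_lt. unfold realify. replace (i <? n)%nat with true by (symmetry; apply Nat.ltb_lt, i_lt).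
    reflexivity. }
  assert (realify_hi : forall z i, realify z (i + n)%nat = Im (z i)).
  { intros z i. unfold realify. replace (i + n <? n)%nat with false by (symmetry; apply Nat.ltb_ge; lia).
    do 2 f_equal. lia. }
  assert (realify_eq : forall z w, (forall i, (i < n)%nat -> z i = w i) ->
            forall i, (i < n + n)%nat -> realify z i = realify w i).
  { intros z w zw i i_lt. destruct (Nat.lt_ge_cases i n) as [i_lo | i_hi].
    - rewrite !realify_lo by exact i_lo. rewrite zw by exact i_lo. reflexivity.
    - replace i with (i - n + n)%nat by lia. rewrite !realify_hi, zw by lia. reflexivity. }
  assert (encode_local : forall x y, (forall k, (k < n + n)%nat -> x k = y k) ->
            forall i, (i < n)%nat -> G (encode x) i = G (encode y) i).
  { intros x y xy. apply G_local. intros k k_lt. unfold encode. rewrite !xy by lia. reflexivity. }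
  destruct (FiniteDimension.linear_injective_surjective_R (n + n)
              (fun xr => realify (G (encode xr)))) with (b := realify b) as [xr xr_sol].
  - intros x y xy. apply realify_eq, encode_local, xy.
  - intros a0 x y i i_lt.
    assert (comb : forall j, (j < n)%nat -> G (encode (fun k => a0 * x k + y k)) j =
              Cplus (Cmult (RtoC a0) (G (encode x) j)) (Cmult (RtoC 1) (G (encode y) j))).
    { intros j j_lt. rewrite <- G_lin by exact j_lt. apply G_local; [|exact j_lt].
      intros k k_lt. unfold encode, lincomb. apply C_ext; unfold Re, Im; simpl; ring. }
    destruct (Nat.lt_ge_cases i n) as [i_lo | i_hi].
    + rewrite !realify_lo, comb by exact i_lo. unfold Re; simpl. ring.
    + replace i with (i - n + n)%nat by lia. rewrite !realify_hi, comb by lia.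
      unfold Im; simpl. ring.
  - intros x x0 k k_lt.
    assert (G0 : forall i, (i < n)%nat -> G (encode x) i = RtoC 0).
    { intros i i_lt. apply C_ext.
      - rewrite <- realify_lo by exact i_lt. apply x0. lia.
      - rewrite <- realify_hi. apply x0. lia. }
    pose proof (G_inj _ G0) as enc0.
    destruct (Nat.lt_ge_cases k n) as [k_lo | k_hi].
    + exact (f_equal fst (enc0 k k_lo)).
    + replace k with (k - n + n)%nat by lia. exact (f_equal snd (enc0 (k - n)%nat ltac:(lia))).
  - exists (encode xr). intros i i_lt. apply C_ext.
    + rewrite <- !realify_lo by exact i_lt. apply xr_sol. lia.
    + rewrite <- !realify_hi. apply xr_sol. lia.
Qed.

Definition tail_from (n : nat) (x : seqC) : seqC :=
  fun k => if (k <? n)%nat then RtoC 0 else x k.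

Lemma seq_sub_pad n u : seq_sub u (pad n u) = tail_from n u.
Proof.
  apply functional_extensionality; intro k. unfold seq_sub, pad, tail_from.
  destruct (k <? n)%nat; ring.
Qed.

Lemma is_series_zero : is_series (fun _ : nat => 0) 0.
Proof.
  apply (filterlim_ext (fun _ => 0)); [|apply filterlim_const].
  intro m. rewrite sum_n_const. ring.
Qed.

Lemma in_l2_finite_support mu x n : (forall k, (n <= k)%nat -> x k = RtoC 0) -> in_l2 mu x.
Proof.
  intros x_supp. apply (ex_series_incr_n _ n).
  assert (tail0 : forall k, l2_term mu x (n + k) = 0).
  { intro k. unfold l2_term. rewrite x_supp by lia. rewrite Cmod_0. ring. }
  apply (ex_series_ext (fun _ => 0)); [intro k; symmetry; apply tail0 | exact (ex_intro _ 0 is_series_zero)].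
Qed.

Lemma in_l2_pad mu n x : in_l2 mu (pad n x).
Proof.
  apply (in_l2_finite_support _ _ n). intros k k_ge. unfold pad.
  replace (k <? n)%nat with false by (symmetry; apply Nat.ltb_ge; lia). reflexivity.
Qed.

Lemma l2sq_pad_le mu n x : in_l2 mu x -> l2sq mu (pad n x) <= l2sq mu x.
Proof.
  intros x_l2. apply l2sq_le_of_Cmod_le; [|exact x_l2].
  intro k. unfold pad. destruct (k <? n)%nat; [lra | rewrite Cmod_0; apply Cmod_ge_0].
Qed.

Lemma in_l2_tail_from mu n x : in_l2 mu x -> in_l2 mu (tail_from n x).
Proof.
  intros x_l2. apply (l2sq_le_of_Cmod_le _ _ x); [|exact x_l2].
  intro k. unfold tail_from. destruct (k <? n)%nat; [rewrite Cmod_0; apply Cmod_ge_0 | lra].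
Qed.

Lemma l2sq_pad_tail_from mu n x : in_l2 mu (tail_from n x) ->
  l2sq mu x = l2sq mu (pad n x) + l2sq mu (tail_from n x).
Proof.
  intros tail_l2. unfold l2sq.
  rewrite <- Series_plus by (apply in_l2_pad || exact tail_l2).
  apply Series_ext. intro k. unfold plus; simpl. unfold l2_term, pad, tail_from.
  destruct (k <? n)%nat; rewrite Cmod_0; ring.
Qed.

Lemma l2sq_tail_from_succ mu u n : in_l2 mu u ->
  l2sq mu (tail_from (S n) u) = l2sq mu u - sum_n (l2_term mu u) n.
Proof.
  intros u_l2. unfold l2sq.
  rewrite (Series_incr_n (l2_term mu u) (S n)), sum_n_Reals by (lia || exact u_l2).
  rewrite Series_incr_n_aux with (n := S n).
  - simpl Init.Nat.pred. ring_simplify. apply Series_ext. intro k.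
    unfold l2_term, tail_from.
    replace (S n + k <? S n)%nat with false by (symmetry; apply Nat.ltb_ge; lia). reflexivity.
  - intros k k_lt. unfold l2_term, tail_from.
    replace (k <? S n)%nat with true by (symmetry; apply Nat.ltb_lt; lia).
    rewrite Cmod_0. ring.
Qed.

Lemma l2norm_tail_from_lim mu u : in_l2 mu u ->
  is_lim_seq (fun n => l2norm mu (tail_from n u)) 0.
Proof.
  intros u_l2. apply is_lim_seq_incr_1. rewrite <- sqrt_0.
  apply (is_lim_seq_continuous sqrt (fun n => l2sq mu (tail_from (S n) u)) 0);
    [apply continuity_pt_sqrt; lra|].
  apply (is_lim_seq_ext (fun n => l2sq mu u - sum_n (l2_term mu u) n));
    [intro n; symmetry; apply l2sq_tail_from_succ, u_l2|].
  replace 0 with (l2sq mu u - l2sq mu u) by ring.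
  apply is_lim_seq_minus'; [apply is_lim_seq_const | apply (Series_correct _ u_l2)].
Qed.

Definition shift_right (s : nat) (y : seqC) : seqC :=
  fun k => if (k <? s)%nat then RtoC 0 else y (k - s)%nat.

Lemma l2_term_shifted_tail_le mu y n s k : (s <= n)%nat ->
  l2_term mu (tail_from n (shift_right s y)) k <=
  (if (k <? n)%nat then 0
   else Rpower (INR s + 1) (Rabs (2 * mu)) / (INR (n - s) + 1) ^ 2
        * l2_term (mu + 1) y (k - s)).
Proof.
  intros s_le. unfold l2_term, tail_from, shift_right.
  destruct (Nat.ltb_spec k n) as [k_lt | k_ge]; [rewrite Cmod_0; lra|].
  replace (k <? s)%nat with false by (symmetry; apply Nat.ltb_ge; lia).
  destruct (Rpower_weight_shift (k - s) s mu) as [_ weight].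
  replace (k - s + s)%nat with k in weight by lia.
  set (W := Rpower (INR s + 1) (Rabs (2 * mu))) in *.
  set (q := INR (k - s) + 1). set (r := INR (n - s) + 1).
  assert (r_pos : 0 < r) by (pose proof (pos_INR (n - s)); unfold r; lra).
  assert (r_le : r <= q) by (apply Rplus_le_compat_r, le_INR; lia).
  rewrite Rpower_plus1_sq by lra.
  set (V := Cmod (y (k - s)%nat) ^ 2). set (P := Rpower q (2 * mu)) in *.
  assert (0 <= V) by apply pow2_ge_0. pose proof (Rpower_pos q (2 * mu)).
  assert (ratio : 1 <= q ^ 2 / r ^ 2).
  { apply (Rmult_le_reg_r (r ^ 2)); [nra|].
    unfold Rdiv. rewrite Rmult_assoc, Rinv_l by nra. nra. }
  replace (W / r ^ 2 * (V * (P * q ^ 2))) with (V * (W * P) * (q ^ 2 / r ^ 2))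
    by (field; lra).
  assert (0 < W * P) by (apply Rmult_lt_0_compat; apply Rpower_pos).
  apply Rle_trans with (V * (W * P)); [apply Rmult_le_compat_l; assumption|].
  rewrite <- (Rmult_1_r (V * (W * P))) at 1.
  apply Rmult_le_compat_l; [apply Rmult_le_pos; lra | exact ratio].
Qed.

Lemma l2sq_shifted_tail_le mu y n s : (s <= n)%nat -> in_l2 (mu + 1) y ->
  in_l2 mu (tail_from n (shift_right s y)) /\
  l2sq mu (tail_from n (shift_right s y))
    <= Rpower (INR s + 1) (Rabs (2 * mu)) / (INR (n - s) + 1) ^ 2 * l2sq (mu + 1) y.
Proof.
  intros s_le y_l2.
  set (c := Rpower (INR s + 1) (Rabs (2 * mu)) / (INR (n - s) + 1) ^ 2).
  assert (c_ge0 : 0 <= c).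
  { pose proof (pos_INR (n - s)). pose proof (Rpower_pos (INR s + 1) (Rabs (2 * mu))).
    unfold c. apply Rdiv_le_0_compat; [lra | apply pow_lt; lra]. }
  set (b := fun k => if (k <? n)%nat then 0 else c * l2_term (mu + 1) y (k - s)).
  assert (b_shift : forall k, b (n + k)%nat = c * l2_term (mu + 1) y (k + (n - s))).
  { intro k. unfold b. replace (n + k <? n)%nat with false by (symmetry; apply Nat.ltb_ge; lia).
    do 2 f_equal. lia. }
  destruct (Series_shift_le (l2_term (mu + 1) y) (n - s) (l2_term_nonneg _ _) y_l2)
    as [shift_ex shift_le].
  assert (b_ex : ex_series b).
  { apply (ex_series_incr_n _ n).
    apply (ex_series_ext (fun k => c * l2_term (mu + 1) y (k + (n - s))));
      [intro k; symmetry; apply b_shift | exact (ex_series_scal_l c _ shift_ex)]. }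
  assert (b_sum : Series b <= c * l2sq (mu + 1) y).
  { rewrite (Series_incr_n_aux b n)
      by (intros k k_lt; unfold b; replace (k <? n)%nat with true
            by (symmetry; apply Nat.ltb_lt; lia); reflexivity).
    rewrite (Series_ext _ _ b_shift), Series_scal_l.
    apply Rmult_le_compat_l; assumption. }
  destruct (ex_series_le_nonneg (l2_term mu (tail_from n (shift_right s y))) b) as [z_ex z_le];
    [|exact b_ex|].
  - intro k. split; [apply l2_term_nonneg | apply l2_term_shifted_tail_le, s_le].
  - split; [exact z_ex | eapply Rle_trans; [exact z_le | exact b_sum]].
Qed.

Section StackedOperator.

Variables (N : nat) (a : nat -> R -> C) (B : nat -> seqC -> C).

Hypothesis N_ge1 : (1 <= N)%nat.

Hypothesis Mop_bounded : forall l, (l < N)%nat -> forall mu : R, exists K, forall v, in_l2 mu v ->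
  (forall j, cseries_conv (fun k => Cmult (mult_entry l (a l) j k) (v k))) /\
  in_l2 mu (Mop l (a l) v) /\ l2norm mu (Mop l (a l) v) <= K * l2norm mu v.

Lemma Mop_cseries_conv l mu v : (l < N)%nat -> in_l2 mu v ->
  forall j, cseries_conv (fun k => Cmult (mult_entry l (a l) j k) (v k)).
Proof. intros l_lt v_l2. destruct (Mop_bounded l l_lt mu) as [K M_bd]. apply (M_bd v v_l2). Qed.

Lemma Mop_l2_bounded l mu : (l < N)%nat -> l2_bounded (Mop l (a l)) mu mu.
Proof.
  intros l_lt. destruct (Mop_bounded l l_lt mu) as [K M_bd].
  exists (K ^ 2). split; [apply pow2_ge_0|]. intros v v_l2.
  destruct (M_bd v v_l2) as [_ [Mv_l2 Mv_le]].
  split; [exact Mv_l2 | apply l2norm_le_sq, Mv_le].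
Qed.

Definition Lop_lower (x : seqC) : seqC := fun j =>
  Cplus (csum (N - 1) (fun i => Schain (S i) (N - S i) (Mop (S i) (a (S i)) (Dop (S i) x)) j))
        (Schain 0 N (Mop 0 (a 0%nat) x) j).

Lemma Lop_split x j : Lop N a x j = Cplus (Dop N x j) (Lop_lower x j).
Proof. unfold Lop, Lop_lower. ring. Qed.

Lemma Lop_lower_l2_bounded mu : l2_bounded Lop_lower (mu + 1) (mu + 1).
Proof.
  apply (l2_bounded_plus
           (fun v j => csum (N - 1)
              (fun i => Schain (S i) (N - S i) (Mop (S i) (a (S i)) (Dop (S i) v)) j))
           (fun v j => Schain 0 N (Mop 0 (a 0%nat) v) j)).
  - apply (l2_bounded_csum
             (fun i v => Schain (S i) (N - S i) (Mop (S i) (a (S i)) (Dop (S i) v)))).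
    intros i i_lt.
    apply (l2_bounded_comp (fun v => Mop (S i) (a (S i)) (Dop (S i) v)) _ _ mu).
    + apply (l2_bounded_comp _ _ _ mu); [apply Dop_l2_bounded | apply Mop_l2_bounded; lia].
    + apply Schain_l2_bounded_succ; lia.
  - apply (l2_bounded_comp _ _ _ (mu + 1));
      [apply Mop_l2_bounded; lia | apply Schain_l2_bounded].
Qed.

Lemma Lop_lincomb mu al be x y : in_l2 (mu + 1) x -> in_l2 (mu + 1) y ->
  forall j, Lop N a (lincomb al be x y) j = Cplus (Cmult al (Lop N a x j)) (Cmult be (Lop N a y j)).
Proof.
  intros x_l2 y_l2 j.
  assert (D_conv : forall i z, (i < N - 1)%nat -> in_l2 (mu + 1) z -> forall j,
            cseries_conv (fun k => Cmult (mult_entry (S i) (a (S i)) j k) (Dop (S i) z k))).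
  { intros i z i_lt z_l2. apply (Mop_cseries_conv _ mu); [lia|].
    apply (l2_bounded_in _ (mu + 1)); [apply Dop_l2_bounded | exact z_l2]. }
  unfold Lop.
  rewrite (csum_ext (N - 1) _
     (fun i => Cplus (Cmult al (Schain (S i) (N - S i) (Mop (S i) (a (S i)) (Dop (S i) x)) j))
                     (Cmult be (Schain (S i) (N - S i) (Mop (S i) (a (S i)) (Dop (S i) y)) j)))).
  2:{ intros i i_lt. rewrite Dop_lincomb, Mop_lincomb, Schain_lincomb by auto. reflexivity. }
  rewrite csum_lincomb, Mop_lincomb, Schain_lincomb, Dop_lincomb
    by (apply (Mop_cseries_conv _ (mu + 1)); auto; lia).
  unfold lincomb. ring.
Qed.

Lemma BLop_tail_from x n : (N <= n)%nat -> (forall k, (n <= k)%nat -> x k = RtoC 0) ->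
  tail_from n (BLop N a B x) = tail_from n (shift_right N (Lop_lower x)).
Proof.
  intros n_ge x_supp. apply functional_extensionality; intro k.
  unfold tail_from, shift_right, BLop.
  destruct (Nat.ltb_spec k n) as [k_lt | k_ge]; [reflexivity|].
  replace (k <? N)%nat with false by (symmetry; apply Nat.ltb_ge; lia).
  rewrite Lop_split. unfold Dop.
  replace (k - N + N)%nat with k by lia. rewrite x_supp by lia. ring.
Qed.

Variable mu : R.

Hypothesis BLop_in_l2 : forall v, in_l2 (mu + 1) v -> in_l2 mu (BLop N a B v).

Hypothesis BLop_bounded_below : exists K, forall v, in_l2 (mu + 1) v ->
  l2norm (mu + 1) v <= K * l2norm mu (BLop N a B v).

Lemma finite_section_bounded_below : exists c n0, 0 <= c /\
  forall n, (n0 <= n)%nat -> forall x, (forall k, (n <= k)%nat -> x k = RtoC 0) ->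
    l2sq (mu + 1) x <= c * l2sq mu (pad n (BLop N a B x)).
Proof.
  destruct BLop_bounded_below as [K0 lower].
  destruct (Lop_lower_l2_bounded mu) as [C1 [C1_ge0 lower_bd]].
  set (W := Rpower (INR N + 1) (Rabs (2 * mu))).
  assert (W_pos : 0 < W) by apply Rpower_pos.
  destruct (INR_unbounded (2 * K0 ^ 2 * W * C1)) as [m m_gt].
  exists (2 * K0 ^ 2), (N + m)%nat. split; [pose proof (pow2_ge_0 K0); lra|].
  intros n n_ge x x_supp.
  assert (x_l2 : in_l2 (mu + 1) x) by exact (in_l2_finite_support _ _ n x_supp).
  set (T := BLop N a B x).
  assert (T_l2 : in_l2 mu T) by exact (BLop_in_l2 x x_l2).
  assert (x_le : l2sq (mu + 1) x <= K0 ^ 2 * l2sq mu T) by exact (l2norm_le_sq _ _ _ _ _ (lower x x_l2)).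
  rewrite (l2sq_pad_tail_from mu n T (in_l2_tail_from _ _ _ T_l2)) in x_le.
  destruct (lower_bd x x_l2) as [Lx_l2 Lx_le].
  destruct (l2sq_shifted_tail_le mu (Lop_lower x) n N ltac:(lia) Lx_l2) as [_ tail_le].
  unfold T in x_le. rewrite BLop_tail_from in x_le by (lia || exact x_supp). fold T W in x_le, tail_le.
  set (r := INR (n - N) + 1) in *.
  assert (r_ge : INR m + 1 <= r) by (apply Rplus_le_compat_r, le_INR; lia).
  pose proof (pos_INR m).
  assert (small : K0 ^ 2 * (W / r ^ 2) * C1 <= 1 / 2).
  { replace (K0 ^ 2 * (W / r ^ 2) * C1) with ((K0 ^ 2 * W * C1) / r ^ 2) by (field; lra).
    apply (Rmult_le_reg_r (r ^ 2)); [nra|].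
    unfold Rdiv. rewrite Rmult_assoc, Rinv_l by nra. nra. }
  pose proof (l2sq_nonneg (mu + 1) x). pose proof (l2sq_nonneg (mu + 1) (Lop_lower x)).
  pose proof (pow2_ge_0 K0).
  assert (W / r ^ 2 * l2sq (mu + 1) (Lop_lower x) <= W / r ^ 2 * (C1 * l2sq (mu + 1) x)).
  { apply Rmult_le_compat_l; [apply Rdiv_le_0_compat; nra | exact Lx_le]. }
  assert (K0 ^ 2 * l2sq mu (tail_from n (shift_right N (Lop_lower x))) <= 1 / 2 * l2sq (mu + 1) x).
  { apply Rle_trans with (K0 ^ 2 * (W / r ^ 2 * (C1 * l2sq (mu + 1) x))); [nra|].
    replace (K0 ^ 2 * (W / r ^ 2 * (C1 * l2sq (mu + 1) x)))
      with (K0 ^ 2 * (W / r ^ 2) * C1 * l2sq (mu + 1) x) by ring.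
    apply Rmult_le_compat_r; assumption. }
  lra.
Qed.

Variable Dz : R.

Hypothesis B_linear : forall i, (i < N)%nat ->
  forall v w, in_l2 Dz v -> in_l2 Dz w -> forall al be : C,
    B i (fun k => Cplus (Cmult al (v k)) (Cmult be (w k)))
    = Cplus (Cmult al (B i v)) (Cmult be (B i w)).

Hypothesis Dz_le : Dz <= mu + 1.

Lemma BLop_lincomb al be x y : in_l2 (mu + 1) x -> in_l2 (mu + 1) y ->
  forall j, BLop N a B (lincomb al be x y) j
            = Cplus (Cmult al (BLop N a B x j)) (Cmult be (BLop N a B y j)).
Proof.
  intros x_l2 y_l2 j. unfold BLop.
  destruct (Nat.ltb_spec j N) as [j_lt | j_ge].
  - apply B_linear; [exact j_lt | |];
      (apply (l2_bounded_in (fun v => v) (mu + 1)); [apply l2_bounded_id, Dz_le | assumption]).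
  - apply (Lop_lincomb mu); assumption.
Qed.

End StackedOperator.


Section FiniteSections.

Variables (T : seqC -> seqC) (mu : R) (n : nat) (c K : R).

Hypothesis T_lincomb : forall al be x y, in_l2 (mu + 1) x -> in_l2 (mu + 1) y ->
  forall j, T (lincomb al be x y) j = Cplus (Cmult al (T x j)) (Cmult be (T y j)).

Hypothesis c_ge0 : 0 <= c.

Hypothesis finite_section_stable : forall x, (forall k, (n <= k)%nat -> x k = RtoC 0) ->
  l2sq (mu + 1) x <= c * l2sq mu (pad n (T x)).

Lemma pad_support (x : seqC) k : (n <= k)%nat -> pad n x k = RtoC 0.
Proof. intros k_ge. unfold pad. destruct (Nat.ltb_spec k n); [lia | reflexivity]. Qed.

Lemma finite_section_injective z : (forall k, (n <= k)%nat -> z k = RtoC 0) ->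
  (forall i, (i < n)%nat -> T z i = RtoC 0) -> forall k, z k = RtoC 0.
Proof.
  intros z_supp Tz0.
  assert (pad_Tz0 : l2sq mu (pad n (T z)) = 0).
  { unfold l2sq. rewrite <- (is_series_unique _ _ is_series_zero). apply Series_ext. intro k.
    unfold l2_term, pad. destruct (Nat.ltb_spec k n); [rewrite Tz0 by assumption|];
      rewrite Cmod_0; ring. }
  pose proof (finite_section_stable z z_supp) as stable_z. rewrite pad_Tz0, Rmult_0_r in stable_z.
  apply (l2sq_eq0 (mu + 1)); [exact (in_l2_finite_support _ _ n z_supp)|].
  pose proof (l2sq_nonneg (mu + 1) z). lra.
Qed.

Lemma finite_section_invertible : finsec_invertible T n.
Proof.
  intro b.
  assert (T_pad_lincomb : forall al be x y j,
            T (pad n (lincomb al be x y)) j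
            = Cplus (Cmult al (T (pad n x) j)) (Cmult be (T (pad n y) j))).
  { intros. rewrite pad_lincomb. apply T_lincomb; apply in_l2_pad. }
  destruct (linear_injective_surjective_C n (fun x => T (pad n x))) with (b := b) as [x x_sol].
  - intros x y xy i _. f_equal. apply functional_extensionality; intro k. unfold pad.
    destruct (Nat.ltb_spec k n); [apply xy; assumption | reflexivity].
  - intros al be x y i _. apply T_pad_lincomb.
  - intros x Tx0 k k_lt.
    rewrite <- (finite_section_injective (pad n x) (pad_support x) Tx0 k).
    unfold pad. destruct (Nat.ltb_spec k n); [reflexivity | lia].
  - exists x. split; [exact x_sol|]. intros y y_sol k k_lt.
    set (d := lincomb (RtoC 1) (RtoC (-1)) (pad n y) (pad n x)).
    assert (d0 : d k = RtoC 0).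
    { apply finite_section_injective.
      - intros k' k'_ge. unfold d, lincomb. rewrite !pad_support by assumption. ring.
      - intros i i_lt. unfold d. rewrite <- pad_lincomb, T_pad_lincomb, y_sol, x_sol by assumption.
        ring. }
    unfold d, lincomb, pad in d0. destruct (Nat.ltb_spec k n); [|lia].
    replace (y k) with (Cplus (Cplus (Cmult (RtoC 1) (y k)) (Cmult (RtoC (-1)) (x k))) (x k))
      by ring.
    rewrite d0. ring.
Qed.

Hypothesis T_bounded : forall v, in_l2 (mu + 1) v ->
  in_l2 mu (T v) /\ l2norm mu (T v) <= K * l2norm (mu + 1) v.

Lemma finite_section_quasi_optimal u un : in_l2 (mu + 1) u ->
  (forall i, (i < n)%nat -> T (pad n un) i = T u i) ->
  l2norm (mu + 1) (seq_sub u (pad n un))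
    <= sqrt (1 + c * K ^ 2) * l2norm (mu + 1) (seq_sub u (pad n u)).
Proof.
  intros u_l2 un_sol. rewrite seq_sub_pad.
  set (r := tail_from n u). set (d := lincomb (RtoC 1) (RtoC (-1)) (pad n u) (pad n un)).
  assert (r_l2 : in_l2 (mu + 1) r) by exact (in_l2_tail_from _ _ _ u_l2).
  assert (r_eq : r = lincomb (RtoC 1) (RtoC (-1)) u (pad n u)).
  { unfold r. rewrite <- seq_sub_pad. apply functional_extensionality; intro k.
    unfold seq_sub, lincomb. ring. }
  assert (split : l2sq (mu + 1) (seq_sub u (pad n un)) = l2sq (mu + 1) d + l2sq (mu + 1) r).
  { assert (tail_eq : tail_from n (seq_sub u (pad n un)) = r).
    { apply functional_extensionality; intro k. unfold r, tail_from, seq_sub, pad.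
      destruct (k <? n)%nat; [reflexivity | ring]. }
    assert (pad_eq : pad n (seq_sub u (pad n un)) = d).
    { apply functional_extensionality; intro k. unfold d, lincomb, seq_sub, pad.
      destruct (k <? n)%nat; ring. }
    rewrite (l2sq_pad_tail_from _ n), pad_eq, tail_eq; [reflexivity|]. rewrite tail_eq. exact r_l2. }
  assert (Td_eq : l2sq mu (pad n (T d)) = l2sq mu (pad n (T r))).
  { apply Series_ext. intro k. unfold l2_term, pad. destruct (Nat.ltb_spec k n); [|reflexivity].
    unfold d. rewrite r_eq, !T_lincomb by (assumption || apply in_l2_pad).
    rewrite un_sol by assumption.
    replace (Cplus (Cmult (RtoC 1) (T (pad n u) k)) (Cmult (RtoC (-1)) (T u k)))
      with (Copp (Cplus (Cmult (RtoC 1) (T u k)) (Cmult (RtoC (-1)) (T (pad n u) k)))) by ring.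
    rewrite Cmod_opp. reflexivity. }
  assert (d_le : l2sq (mu + 1) d <= c * (K ^ 2 * l2sq (mu + 1) r)).
  { eapply Rle_trans; [apply finite_section_stable; intros k k_ge; unfold d, lincomb;
                       rewrite !pad_support by assumption; ring|].
    rewrite Td_eq. apply Rmult_le_compat_l; [exact c_ge0|].
    destruct (T_bounded r r_l2) as [Tr_l2 Tr_le].
    eapply Rle_trans; [apply l2sq_pad_le, Tr_l2 | apply l2norm_le_sq, Tr_le]. }
  unfold l2norm. fold (l2sq (mu + 1) (seq_sub u (pad n un))) (l2sq (mu + 1) r).
  rewrite <- sqrt_mult by (pose proof (pow2_ge_0 K); nra || apply l2sq_nonneg).
  apply sqrt_le_1_alt. rewrite split. lra.
Qed.

End FiniteSections.
Theorem theorem4p5 (N : nat) (a : nat -> R -> C) (B : nat -> seqC -> C)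
  (D lam : Z) (c : nat -> C) (f u : seqC) :
  (1 <= N)%nat ->
  (* coefficient functions a^0..a^{N-1}: continuous on [-1,1] ... *)
  (forall l, (l < N)%nat -> forall x, -1 <= x <= 1 ->
     continuous (fun y => Re (a l y)) x /\ continuous (fun y => Im (a l y)) x) ->
  (* ... and smooth enough that every M_l[a^l] is bounded on every l^2_mu *)
  (forall l, (l < N)%nat -> forall mu : R, exists K, forall v, in_l2 mu v ->
     (forall j, cseries_conv (fun k => Cmult (mult_entry l (a l) j k) (v k))) /\
     in_l2 mu (Mop l (a l) v) /\ l2norm mu (Mop l (a l) v) <= K * l2norm mu v) ->
  (* B : l^2_D -> C^N is linear and bounded *)
  (forall i, (i < N)%nat ->
     (forall v w, in_l2 (IZR D) v -> in_l2 (IZR D) w -> forall al be : C,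
        B i (fun k => Cplus (Cmult al (v k)) (Cmult be (w k)))
        = Cplus (Cmult al (B i v)) (Cmult be (B i w))) /\
     (exists K, forall v, in_l2 (IZR D) v -> Cmod (B i v) <= K * l2norm (IZR D) v)) ->
  (D - 1 <= lam)%Z ->
  in_l2 (IZR lam - INR N + 1) f ->
  invertible_between (BLop N a B) (IZR lam + 1) (IZR lam) ->
  in_l2 (IZR lam + 1) u ->
  (forall j, BLop N a B u j = rhs N c f j) ->
  (exists Cst : R, exists n0 : nat, forall n, (n0 <= n)%nat ->
     finsec_invertible (BLop N a B) n /\
     forall un : seqC,
       (forall i, (i < n)%nat -> BLop N a B (pad n un) i = rhs N c f i) ->
       l2norm (IZR lam + 1) (seq_sub u (pad n un))
         <= Cst * l2norm (IZR lam + 1) (seq_sub u (pad n u))) /\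
  is_lim_seq (fun n => l2norm (IZR lam + 1) (seq_sub u (pad n u))) 0.
Proof.
  intros N_ge1 _ Mop_bounded B_hyp D_le _ BL_invertible u_l2 u_sol.
  destruct BL_invertible as [[K BL_bounded] [_ [_ BL_bounded_below]]].
  assert (Dz_le : IZR D <= IZR lam + 1) by (rewrite <- plus_IZR; apply IZR_le; lia).
  pose proof (BLop_lincomb N a B N_ge1 Mop_bounded (IZR lam) (IZR D)
                (fun i i_lt => proj1 (B_hyp i i_lt)) Dz_le) as BL_lincomb.
  destruct (finite_section_bounded_below N a B N_ge1 Mop_bounded (IZR lam)
              (fun v v_l2 => proj1 (BL_bounded v v_l2)) BL_bounded_below)
    as [kappa [n0 [kappa_ge0 BL_stable]]].
  split.
  - exists (sqrt (1 + kappa * K ^ 2)), n0. intros n n_ge. split.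
    + exact (finite_section_invertible _ _ n kappa BL_lincomb (BL_stable n n_ge)).
    + intros un un_sol.
      apply (finite_section_quasi_optimal _ _ n kappa K BL_lincomb kappa_ge0 (BL_stable n n_ge)
               BL_bounded u un u_l2).
      intros i i_lt. rewrite un_sol, u_sol by assumption. reflexivity.
  - apply (is_lim_seq_ext (fun n => l2norm (IZR lam + 1) (tail_from n u)));
      [intro n; rewrite seq_sub_pad; reflexivity | exact (l2norm_tail_from_lim _ _ u_l2)].
Qed.
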